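(* Let $G(\mathcal V,\mathcal E)$ be a finite simple directed graph with $n=|\mathcal V|\ge 2$ nodes and let $f\ge 0$ be an integer. Suppose that a correct Byzantine consensus algorithm tolerating up to $f$ Byzantine faulty nodes exists for $G(\mathcal V,\mathcal E)$. Then for every partition $L,C,R,F$ of $\mathcal V$ (some of $C,F$ possibly empty) such that $L$ and $R$ are both non-empty and $|F|\le f$, either $L\cup C\rightarrow R$ or $R\cup C\rightarrow L$.
   Context: Network model: $G(\mathcal V,\mathcal E)$ is a simple directed graph without self-loops; node $i$ can send messages directly to node $j$ if and only if $(i,j)\in\mathcal E$. The system is synchronous, links are reliable, FIFO and deliver each message exactly once within bounded time; the topology is known to all nodes. Each node has an input in $\{0,1\}$. Up to $f$ nodes may be Byzantine faulty: they may deviate arbitrarily from the algorithm, may collude, and know the whole execution state, the algorithm and the topology. An algorithm is a correct Byzantine consensus algorithm if, for every set of at most $f$ faulty nodes, every behavior of the faulty nodes and all inputs: (Agreement) all fault-free nodes output the same value; (Validity) the output of every fault-free node equals the input of some fault-free node; (Termination) every fault-free node eventually decides on an output. Notation: for disjoint sets $X,Y\subseteq\mathcal V$ with $Y$ non-empty, $X\rightarrow Y$ means $|\{i\in X : (i,j)\in\mathcal E \text{ for some } j\in Y\}|>f$, i.e. $X$ contains at least $f+1$ distinct incoming neighbors of $Y$; $X\not\rightarrow Y$ means this fails. Sets are considered disjoint if either is empty. *)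

From mathcomp Require Import all_boot.
Set Implicit Arguments. Unset Strict Implicit. Unset Printing Implicit Defensive.

(* Synchronous message-passing model on a directed graph (V, e):
   node i can send to j iff e i j. *)
Record algorithm (V : finType) := Algorithm {
  st : Type;
  msg : Type;
  init : V -> bool -> st;
  send : V -> nat -> st -> V -> msg;           (* send i r s j : message i -> j in round r *)
  trans : V -> nat -> st -> (V -> option msg) -> st;
     (* trans j r s rcv : new state; rcv i = Some m iff (i,j) is an edge, m received *)
  decide : V -> st -> option bool
}.

(* Execution: F = faulty set, x = inputs, byz r i j = arbitrary message sent
   by faulty i to j in round r (adversary is unrestricted). *)
Fixpoint exec (V : finType) (e : rel V) (A : algorithm V) (F : {set V})
    (x : V -> bool) (byz : nat -> V -> V -> msg A) (r : nat) : V -> st A :=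
  match r with
  | 0 => fun i => @init V A i (x i)
  | r'.+1 => fun j =>
      @trans V A j r' (@exec V e A F x byz r' j)
        (fun i => if e i j then
                    Some (if i \in F then byz r' i j
                          else @send V A i r' (@exec V e A F x byz r' i) j)
                  else None)
  end.

Definition outputs_at (V : finType) (e : rel V) (A : algorithm V) F x byz
    (i : V) (r : nat) (v : bool) : Prop :=
  @decide V A i (@exec V e A F x byz r i) = Some v /\
  forall r', r' < r -> @decide V A i (@exec V e A F x byz r' i) = None.

Definition correct_consensus (V : finType) (e : rel V) (f : nat)
    (A : algorithm V) : Prop :=
  forall (F : {set V}) (x : V -> bool) (byz : nat -> V -> V -> msg A),
    #|F| <= f ->
    (forall i j ri rj vi vj, i \notin F -> j \notin F ->
        @outputs_at V e A F x byz i ri vi -> @outputs_at V e A F x byz j rj vj ->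
        vi = vj) /\
    (forall i r v, i \notin F -> @outputs_at V e A F x byz i r v ->
        exists2 k, k \notin F & x k = v) /\
    (forall i, i \notin F -> exists r v, @outputs_at V e A F x byz i r v).

Definition consensus_possible (V : finType) (e : rel V) (f : nat) : Prop :=
  exists A : algorithm V, @correct_consensus V e f A.

(* X -> Y : X contains at least f+1 distinct incoming neighbours of Y *)
Definition reaches (V : finType) (e : rel V) (f : nat) (X Y : {set V}) : Prop :=
  f < #|[set i in X | [exists j in Y, e i j]]|.

(* Indistinguishability.  If neither L u C -> R nor R u C -> L, the sets
   N0 of in-neighbours of L in R u C and N1 of in-neighbours of R in L u C
   both have at most f elements.  Run three executions in lock step: E, with
   faulty set F, inputs 1 on R and 0 elsewhere, where F shows L what it would
   send in E0 and shows R what it would send in E1; E0, with faulty set N0 and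
   all inputs 0; E1, with faulty set N1 and all inputs 1, where the faulty nodes
   of E0 and E1 replay their behaviour in E.  Then L cannot distinguish E from
   E0 and R cannot distinguish E from E1, so by validity L decides 0 and R
   decides 1 in E, contradicting agreement. *)

From mathcomp Require Import all_boot.
From Stdlib Require Import FunctionalExtensionality.

Set Implicit Arguments.
Unset Strict Implicit.
Unset Printing Implicit Defensive.

Section Executions.
Variables (V : finType) (e : rel V) (A : algorithm V).

Local Notation exec := (@exec V e A).
Local Notation send := (@send V A).
Local Notation trans := (@trans V A).
Local Notation init := (@init V A).
Local Notation outputs_at := (@outputs_at V e A).

Lemma exec_mimic (S F F' : {set V}) x x' byz byz' :
  {in S, x =1 x'} ->
  (forall i j, j \in S -> e i j -> i \notin F -> i \notin F' -> i \in S) ->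
  [disjoint F & F'] ->
  (forall r i j, j \in S -> byz r i j = send i r (exec F' x' byz' r i) j) ->
  (forall r i j, j \in S -> byz' r i j = send i r (exec F x byz r i) j) ->
  forall r, {in S, exec F x byz r =1 exec F' x' byz' r}.
Proof.
move=> eq_x closedS dFF' byzS byz'S; elim=> [|r IH] j jS /=; first by rewrite eq_x.
rewrite IH //; congr (trans _ _ _ _); apply: functional_extensionality => i.
case: (e i j) / boolP => eij //; congr Some.
have [iF|iF] := boolP (i \in F); first by rewrite byzS // (disjointFr dFF' iF).
have [iF'|iF'] := boolP (i \in F'); first by rewrite byz'S.
by rewrite IH // (closedS i j).
Qed.

Lemma outputs_at_transfer F x byz F' x' byz' i r v :
  (forall r, exec F x byz r i = exec F' x' byz' r i) ->
  outputs_at F x byz i r v -> outputs_at F' x' byz' i r v.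
Proof. by move=> eq_i [dec_i undec_i]; split=> [|r' lt_r']; rewrite -eq_i // undec_i. Qed.

Section CrossedRuns.
Variables (L R F N0 N1 : {set V}).

Definition forge r (s0 s1 : V -> st A) i j := send i r (if j \in R then s1 i else s0 i) j.

Definition step r (s : V -> st A) (faulty : {set V}) (m : V -> V -> msg A) : V -> st A :=
  fun j => trans j r (s j) (fun i => if e i j then
    Some (if i \in faulty then m i j else send i r (s i) j) else None).

(* The states of E, E0 and E1 must be computed together: the adversary of each
   run reads the states of the others. *)
Fixpoint runs r : (V -> st A) * (V -> st A) * (V -> st A) :=
  match r with
  | 0 => (fun i => init i (i \in R), fun i => init i false, fun i => init i true)
  | r'.+1 =>
    let: (s, s0, s1) := runs r' in
    (step r' s F (forge r' s0 s1),
     step r' s0 N0 (fun i => send i r' (s i)),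
     step r' s1 N1 (fun i => send i r' (s i)))
  end.

Definition byz_split r := forge r (runs r).1.2 (runs r).2.
Definition byz_replay r i := send i r ((runs r).1.1 i).

Lemma exec_runs r :
  [/\ exec F (mem R) byz_split r = (runs r).1.1,
      exec N0 (fun=> false) byz_replay r = (runs r).1.2
    & exec N1 (fun=> true) byz_replay r = (runs r).2].
Proof.
elim: r => [|r [IH IH0 IH1]] //=; rewrite /byz_split /byz_replay /=.
by case: (runs r) IH IH0 IH1 => [[s s0] s1] /= -> -> ->.
Qed.

Hypotheses (dLR : [disjoint L & R]) (dFN0 : [disjoint F & N0]) (dFN1 : [disjoint F & N1]).
Hypothesis closedL : forall i j, j \in L -> e i j -> i \notin F -> i \notin N0 -> i \in L.
Hypothesis closedR : forall i j, j \in R -> e i j -> i \notin F -> i \notin N1 -> i \in R.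

Lemma exec_split_L r :
  {in L, exec F (mem R) byz_split r =1 exec N0 (fun=> false) byz_replay r}.
Proof.
apply: exec_mimic => //.
- by move=> j jL /=; rewrite (disjointFr dLR jL).
- move=> r' i j jL.
  by case: (exec_runs r') => _ E0 _; rewrite /byz_split /forge (disjointFr dLR jL) E0.
- by move=> r' i j _; case: (exec_runs r') => E _ _; rewrite /byz_replay E.
Qed.

Lemma exec_split_R r :
  {in R, exec F (mem R) byz_split r =1 exec N1 (fun=> true) byz_replay r}.
Proof.
apply: exec_mimic => //.
- move=> r' i j jR.
  by case: (exec_runs r') => _ _ E1; rewrite /byz_split /forge jR E1.
- by move=> r' i j _; case: (exec_runs r') => E _ _; rewrite /byz_replay E.
Qed.

Lemma crossed_runs_disagree f l r :
  correct_consensus e f A -> #|F| <= f -> #|N0| <= f -> #|N1| <= f ->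
  l \in L -> l \notin F -> l \notin N0 -> r \in R -> r \notin F -> r \notin N1 ->
  False.
Proof.
move=> consensus hF hN0 hN1 lL lF lN0 rR rF rN1.
have [agree [_ terminate]] := consensus F (mem R) byz_split hF.
have [_ [valid0 _]] := consensus N0 (fun=> false) byz_replay hN0.
have [_ [valid1 _]] := consensus N1 (fun=> true) byz_replay hN1.
have [rl [vl out_l]] := terminate l lF.
have [rr [vr out_r]] := terminate r rF.
have [_ _ /= vl0] := valid0 l rl vl lN0
  (outputs_at_transfer (fun k => exec_split_L k lL) out_l).
have [_ _ /= vr1] := valid1 r rr vr rN1
  (outputs_at_transfer (fun k => exec_split_R k rR) out_r).
by have := agree l r rl rr vl vr lF rF out_l out_r; rewrite -vl0 -vr1.
Qed.

End CrossedRuns.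

Definition incoming (X Y : {set V}) := [set i in X | [exists j in Y, e i j]].

Lemma incoming_closed (X Y F : {set V}) i j :
  i \in X :|: Y :|: F -> j \in Y -> e i j -> i \notin F -> i \notin incoming X Y ->
  i \in Y.
Proof.
move=> cover jY eij /negbTE iF; rewrite inE => /nandP[/negbTE iX | /existsPn no_edge].
- by move: cover; rewrite !inE iX iF orbF.
- by have := no_edge j; rewrite jY eij.
Qed.

End Executions.

Theorem theorem3 (V : finType) (e : rel V) (f : nat) :
  (forall i, ~~ e i i) ->
  2 <= #|V| ->
  consensus_possible e f ->
  forall L C R F : {set V},
    [disjoint L & C] -> [disjoint L & R] -> [disjoint L & F] ->
    [disjoint C & R] -> [disjoint C & F] -> [disjoint R & F] ->
    L :|: C :|: R :|: F = [set: V] ->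
    L != set0 -> R != set0 -> #|F| <= f ->
    reaches e f (L :|: C) R \/ reaches e f (R :|: C) L.
Proof.
move=> _ _ [A consensus] L C R F dLC dLR dLF dCR dCF dRF cover.
case/set0Pn => l lL; case/set0Pn => r rR hF.
have [|hN1] := ltnP f #|incoming e (L :|: C) R|; first by left.
have [|hN0] := ltnP f #|incoming e (R :|: C) L|; first by right.
have in_cover i : [|| i \in L, i \in C, i \in R | i \in F].
  by move/setP: cover => /(_ i); rewrite !inE -!orbA.
have notF i : i \in F -> i \notin R :|: C /\ i \notin L :|: C.
  by move=> iF; rewrite !inE (disjointFl dRF iF) (disjointFl dCF iF) (disjointFl dLF iF).
exfalso; apply: (crossed_runs_disagree (N0 := incoming e (R :|: C) L)
  (N1 := incoming e (L :|: C) R) dLR _ _ _ _ consensus hF hN0 hN1 lL _ _ rR).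
- apply/pred0P => i /=; have [/notF[iRC _]|//] := boolP (i \in F).
  by rewrite inE (negbTE iRC).
- apply/pred0P => i /=; have [/notF[_ iLC]|//] := boolP (i \in F).
  by rewrite inE (negbTE iLC).
- move=> i j; apply: incoming_closed; move: (in_cover i); rewrite !inE.
  by case: (i \in L); case: (i \in C); case: (i \in R).
- move=> i j; apply: incoming_closed; move: (in_cover i); rewrite !inE.
  by case: (i \in L); case: (i \in C); case: (i \in R).
- by rewrite (disjointFr dLF lL).
- by rewrite !inE (disjointFr dLR lL) (disjointFr dLC lL).
- by rewrite (disjointFr dRF rR).
- by rewrite !inE (disjointFl dLR rR) (disjointFl dCR rR).
Qed.
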